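(* Let $\boldsymbol{\xi}^1,\dots,\boldsymbol{\xi}^K\in\mathcal X=[0,1/\sqrt{D}]^D$, $\beta>0$, and $E(\mathbf{x}) = -\frac{1}{\beta}\log\Big(\sum_{\mu=1}^K \exp\big(-\tfrac{\beta}{2}\|\boldsymbol{\xi}^\mu-\mathbf{x}\|_2^2\big)\Big).$ Then for all $\mathbf{x},\mathbf{z}\in\mathcal X$, $\|\nabla_{\mathbf{x}}E(\mathbf{x})-\nabla_{\mathbf{x}}E(\mathbf{z})\|_2\le(1+2K\beta e^{\beta/2})\|\mathbf{x}-\mathbf{z}\|_2.$
   Context: Here $\nabla_{\mathbf{x}}E(\mathbf{x}) = \mathbf{x}-\sum_{\mu=1}^K \frac{\exp(-\frac{\beta}{2}\|\mathbf{x}-\boldsymbol{\xi}^\mu\|_2^2)}{\sum_{\nu=1}^K\exp(-\frac{\beta}{2}\|\mathbf{x}-\boldsymbol{\xi}^\nu\|_2^2)}\boldsymbol{\xi}^\mu$ is the gradient of $E$. *)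

From mathcomp Require Import all_boot all_order all_algebra.
From mathcomp Require Import all_classical all_reals all_analysis.
Set Implicit Arguments. Unset Strict Implicit. Unset Printing Implicit Defensive.
Import Order.TTheory GRing.Theory Num.Theory.
Local Open Scope ring_scope.

Section Hopfield.
Variables (R : realType) (D K : nat).

Definition norm2 (v : 'rV[R]_D) : R := Num.sqrt (\sum_(i < D) v 0 i ^+ 2).

Definition inX (x : 'rV[R]_D) : Prop :=
  forall i : 'I_D, 0 <= x 0 i <= 1 / Num.sqrt (D%:R).

Definition energy (xi : 'I_K -> 'rV[R]_D) (beta : R) (x : 'rV[R]_D) : R :=
  - beta^-1 * ln (\sum_(mu < K) expR (- (beta / 2) * norm2 (xi mu - x) ^+ 2)).

(* its gradient, as given explicitly in the paper:
   x - sum_mu softmax_mu(-beta/2 ||x - xi^nu||^2) xi^mu *)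
Definition gradE (xi : 'I_K -> 'rV[R]_D) (beta : R) (x : 'rV[R]_D) : 'rV[R]_D :=
  x - \sum_(mu < K)
        (expR (- (beta / 2) * norm2 (x - xi mu) ^+ 2)
         / \sum_(nu < K) expR (- (beta / 2) * norm2 (x - xi nu) ^+ 2)) *: xi mu.

End Hopfield.

From mathcomp Require Import all_boot all_order all_algebra.
From mathcomp Require Import all_classical all_reals all_analysis.
From mathcomp Require Import ring lra.
Import Order.TTheory GRing.Theory Num.Theory.
Local Open Scope ring_scope.

(* The gradient is x minus the softmax average of the patterns, so the
   difference of two gradients is x - z minus sum_mu (p_mu(x) - p_mu(z)) xi^mu,
   where ||xi^mu|| <= 1.  All distances in the domain are at most 1, hence each
   Gaussian weight exp(-beta/2 ||x - xi^mu||^2) lies in [e^(-beta/2), 1] and is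
   beta-Lipschitz in x (exp is 1-Lipschitz on nonpositive reals and t |-> t^2 is
   2-Lipschitz on [0, 1]).  Normalising K positive weights whose sum is at
   least L and which each move by at most d moves the normalised weights by at
   most 2 K d / L in l^1; take d = beta ||x - z|| and L = e^(-beta/2). *)

Section EuclideanNorm.
Context {R : realType} {n : nat}.
Implicit Types u v : 'rV[R]_n.

Lemma sumsq_ge0 u : 0 <= \sum_(i < n) u 0 i ^+ 2.
Proof. by apply: sumr_ge0 => i _; rewrite sqr_ge0. Qed.

Lemma norm2_ge0 u : 0 <= norm2 u.
Proof. exact: sqrtr_ge0. Qed.

Lemma norm2_sqr u : norm2 u ^+ 2 = \sum_(i < n) u 0 i ^+ 2.
Proof. by rewrite /norm2 sqr_sqrtr // sumsq_ge0. Qed.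

Lemma lagrange_identity u v :
  \sum_(i < n) \sum_(j < n) (u 0 i * v 0 j - u 0 j * v 0 i) ^+ 2 =
  2 * ((\sum_(i < n) u 0 i ^+ 2) * (\sum_(i < n) v 0 i ^+ 2)
       - (\sum_(i < n) u 0 i * v 0 i) ^+ 2).
Proof.
set S := \sum_(i < n) u 0 i ^+ 2; set T := \sum_(i < n) v 0 i ^+ 2.
set P := \sum_(i < n) u 0 i * v 0 i.
have row_sum i : \sum_(j < n) (u 0 i * v 0 j - u 0 j * v 0 i) ^+ 2
    = u 0 i ^+ 2 * T + v 0 i ^+ 2 * S - 2 * (u 0 i * v 0 i) * P.
  have expand j : (u 0 i * v 0 j - u 0 j * v 0 i) ^+ 2 =
      u 0 i ^+ 2 * v 0 j ^+ 2 + v 0 i ^+ 2 * u 0 j ^+ 2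
      - 2 * (u 0 i * v 0 i) * (u 0 j * v 0 j) by ring.
  under eq_bigr => j _ do rewrite expand.
  by rewrite sumrB big_split /= -!mulr_sumr.
under eq_bigr => i _ do rewrite row_sum.
by rewrite sumrB big_split /= -!mulr_suml -mulr_sumr -/S -/T -/P; ring.
Qed.

Lemma cauchy_schwarz_norm2 u v :
  \sum_(i < n) u 0 i * v 0 i <= norm2 u * norm2 v.
Proof.
have lagrange : (\sum_(i < n) u 0 i * v 0 i) ^+ 2 <=
    (\sum_(i < n) u 0 i ^+ 2) * (\sum_(i < n) v 0 i ^+ 2).
  rewrite -subr_ge0 -(@pmulr_rge0 _ 2) // -lagrange_identity.
  by do 2!apply: sumr_ge0 => ? _; rewrite sqr_ge0.
rewrite /norm2 -sqrtrM ?sumsq_ge0 //; apply: (le_trans (ler_norm _)).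
by rewrite -sqrtr_sqr ler_sqrt // mulr_ge0 // sumsq_ge0.
Qed.

Lemma ler_norm2D u v : norm2 (u + v) <= norm2 u + norm2 v.
Proof.
rewrite {1}/norm2 -(ger0_norm (addr_ge0 (norm2_ge0 u) (norm2_ge0 v))).
rewrite -sqrtr_sqr ler_sqrt ?sqr_ge0 //.
have -> : \sum_(i < n) (u + v) 0 i ^+ 2 =
    norm2 u ^+ 2 + norm2 v ^+ 2 + 2 * \sum_(i < n) u 0 i * v 0 i.
  rewrite !norm2_sqr mulr_sumr -!big_split /=.
  by apply: eq_bigr => i _; rewrite !mxE; ring.
have := cauchy_schwarz_norm2 u v; nra.
Qed.

Lemma norm2Z (c : R) v : norm2 (c *: v) = `|c| * norm2 v.
Proof.
rewrite /norm2 -sqrtr_sqr -sqrtrM ?sqr_ge0 // mulr_sumr.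
by congr Num.sqrt; apply: eq_bigr => i _; rewrite !mxE; ring.
Qed.

Lemma norm2N v : norm2 (- v) = norm2 v.
Proof. by rewrite -scaleN1r norm2Z normrN normr1 mul1r. Qed.

Lemma ler_dist_norm2 u v : `|norm2 u - norm2 v| <= norm2 (u - v).
Proof.
have le_u : norm2 u <= norm2 (u - v) + norm2 v.
  by rewrite -{1}(subrK v u); apply: ler_norm2D.
have le_v : norm2 v <= norm2 (u - v) + norm2 u.
  by rewrite -[norm2 (u - v)]norm2N opprB -{1}(subrK u v); apply: ler_norm2D.
by rewrite ler_norml; apply/andP; split; lra.
Qed.

Lemma ler_norm2_sum {I : finType} (F : I -> 'rV[R]_n) :
  norm2 (\sum_i F i) <= \sum_i norm2 (F i).
Proof.
elim/big_rec2: _ => [|i y1 y2 _ IH].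
  by rewrite /norm2 big1 ?sqrtr0 // => i _; rewrite mxE expr0n.
by apply: (le_trans (ler_norm2D _ _)); rewrite lerD2l.
Qed.

Lemma norm2_le1 u :
  (forall i, `|u 0 i| <= 1 / Num.sqrt n%:R) -> norm2 u <= 1.
Proof.
move=> le_u; rewrite /norm2 -sqrtr1 ler_sqrt //.
case: n u le_u => [|m] u le_u; first by rewrite big_ord0.
apply: (@le_trans _ _ (\sum_(i < m.+1) (1 / Num.sqrt m.+1%:R) ^+ 2)).
  by apply: ler_sum => i _; rewrite -real_normK ?num_real // lerXn2r ?nnegrE.
rewrite sumr_const card_ord expr_div_n expr1n sqr_sqrtr ?ler0n //.
by rewrite div1r -[_ *+ m.+1]mulr_natr mulVf // pnatr_eq0.
Qed.

End EuclideanNorm.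

Lemma inX_norm2_le1 {R : realType} {D : nat} (u : 'rV[R]_D) :
  inX u -> norm2 u <= 1.
Proof.
by move=> hu; apply: norm2_le1 => i; have /andP[? ?] := hu i; rewrite ger0_norm.
Qed.

Lemma inX_norm2B_le1 {R : realType} {D : nat} (u v : 'rV[R]_D) :
  inX u -> inX v -> norm2 (u - v) <= 1.
Proof.
move=> hu hv; apply: norm2_le1 => i; rewrite !mxE ler_norml.
by have /andP[? ?] := hu i; have /andP[? ?] := hv i; apply/andP; split; lra.
Qed.

Lemma ler_sum_term {R : numDomainType} {I : finType} (F : I -> R) (i : I) :
  (forall j, 0 <= F j) -> F i <= \sum_j F j.
Proof.
move=> F_ge0; rewrite (bigD1 i) //= lerDl.
by apply: sumr_ge0 => j _; apply: F_ge0.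
Qed.

Lemma dist_expR_npos {R : realType} {s t : R} :
  s <= 0 -> t <= 0 -> `|expR s - expR t| <= `|s - t|.
Proof.
wlog le_ts : s t / t <= s => [sym s_le0 t_le0|s_le0 t_le0].
  case: (leP t s) => [le_ts|/ltW le_st]; first exact: sym.
  by rewrite distrC [`|s - t|]distrC; apply: sym.
have expRt : expR t = expR s * expR (t - s) by rewrite -expRD addrC subrK.
have := expR_ge1Dx (t - s); have := expR_ge0 s.
have : expR s <= 1 by rewrite expR_le1.
have : expR (t - s) <= 1 by rewrite expR_le1 subr_le0.
rewrite !ger0_norm ?subr_ge0 ?ler_expR // expRt; nra.
Qed.

Lemma dist_sqr_le {R : realDomainType} {m n : R} :
  0 <= m <= 1 -> 0 <= n <= 1 -> `|m ^+ 2 - n ^+ 2| <= 2 * `|m - n|.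
Proof.
move=> /andP[m_ge0 m_le1] /andP[n_ge0 n_le1].
rewrite subr_sqr normrM mulrC ler_wpM2r // ger0_norm; lra.
Qed.

Lemma sum_dist_normalized_le {R : realFieldType} {I : finType} (a b : I -> R)
    (d L : R) :
  (forall i, 0 < a i) -> (forall i, 0 < b i) ->
  (forall i, `|a i - b i| <= d) -> 0 < L -> L <= \sum_j a j ->
  \sum_i `|a i / (\sum_j a j) - b i / (\sum_j b j)| <= 2 * #|I|%:R * d / L.
Proof.
move=> a_gt0 b_gt0 le_ab_d L_gt0 le_L_A.
set A := \sum_j a j; set B := \sum_j b j.
have A_gt0 : 0 < A by apply: lt_le_trans le_L_A.
have [i0 _ | I0] := pickP I; last first.
  by move: A_gt0; rewrite /A big_pred0 ?ltxx.
have B_gt0 : 0 < B.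
  by apply: (lt_le_trans (b_gt0 i0)); apply: ler_sum_term => i; apply: ltW.
have d_ge0 : 0 <= d by apply: le_trans (le_ab_d i0).
have le_BA : `|B - A| <= #|I|%:R * d.
  rewrite -sumrB; apply: (le_trans (ler_norm_sum _ _ _)).
  rewrite -sum1_card natr_sum mulr_suml; apply: ler_sum => i _.
  by rewrite mul1r distrC.
apply: (@le_trans _ _ (\sum_i (d / A + b i * (#|I|%:R * d) / (A * B)))).
  apply: ler_sum => i _.
  have -> : a i / A - b i / B = (a i - b i) / A + b i * (B - A) / (A * B).
    by field; rewrite !gt_eqF.
  apply: (le_trans (ler_normD _ _)); apply: lerD.
    by rewrite normrM normfV (gtr0_norm A_gt0) ler_pM2r ?invr_gt0.
  rewrite !normrM normfV (gtr0_norm (mulr_gt0 A_gt0 B_gt0)) (gtr0_norm (b_gt0 i)).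
  by rewrite ler_pM2r ?invr_gt0 ?mulr_gt0 // ler_pM2l.
rewrite big_split /= sumr_const -!mulr_suml -/B.
have -> : d / A *+ #|I| + B * (#|I|%:R * d) / (A * B) = 2 * #|I|%:R * d / A.
  by rewrite -mulr_natl; field; rewrite !gt_eqF.
by rewrite ler_wpM2l ?mulr_ge0 // lef_pV2 ?posrE.
Qed.

Section HopfieldWeights.
Context {R : realType} {D K : nat} {xi : 'I_K -> 'rV[R]_D} {beta : R}.
Hypotheses (beta_gt0 : 0 < beta) (inX_xi : forall mu, inX (xi mu)).

Definition weight (x : 'rV[R]_D) (mu : 'I_K) : R :=
  expR (- (beta / 2) * norm2 (x - xi mu) ^+ 2).

Definition softmax (x : 'rV[R]_D) (mu : 'I_K) : R :=
  weight x mu / \sum_nu weight x nu.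

Lemma gradE_sub (x z : 'rV[R]_D) :
  gradE xi beta x - gradE xi beta z =
  (x - z) - \sum_mu (softmax x mu - softmax z mu) *: xi mu.
Proof.
under [in RHS]eq_bigr do rewrite scalerBl.
by rewrite sumrB /gradE !opprD !opprK addrACA.
Qed.

Lemma weight_gt0 x mu : 0 < weight x mu.
Proof. exact: expR_gt0. Qed.

Lemma weight_ge x mu : inX x -> expR (- (beta / 2)) <= weight x mu.
Proof.
move=> hx; rewrite ler_expR !mulNr lerN2 ler_piMr ?divr_ge0 ?(ltW beta_gt0) //.
by rewrite expr_le1 ?norm2_ge0 ?inX_norm2B_le1.
Qed.

Lemma weight_dist_le x z mu : inX x -> inX z ->
  `|weight x mu - weight z mu| <= beta * norm2 (x - z).
Proof.
move=> hx hz; rewrite /weight.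
set m := norm2 (x - xi mu); set n := norm2 (z - xi mu).
have m01 : 0 <= m <= 1 by rewrite norm2_ge0 inX_norm2B_le1.
have n01 : 0 <= n <= 1 by rewrite norm2_ge0 inX_norm2B_le1.
have le_mn : `|m - n| <= norm2 (x - z).
  by have := ler_dist_norm2 (x - xi mu) (z - xi mu); rewrite opprB addrA subrK.
have beta2_ge0 : 0 <= beta / 2 by rewrite divr_ge0 ?ltW.
have npos k : - (beta / 2) * k ^+ 2 <= 0 by rewrite mulNr oppr_le0 mulr_ge0 ?sqr_ge0.
apply: (le_trans (dist_expR_npos (npos m) (npos n))).
rewrite -mulrBr normrM normrN (ger0_norm beta2_ge0).
apply: (le_trans (ler_wpM2l beta2_ge0 (dist_sqr_le m01 n01))).
by rewrite mulrA divfK ?pnatr_eq0 // ler_pM2l.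
Qed.

Lemma sum_dist_softmax_le (K_gt0 : (0 < K)%N) x z :
  inX x -> inX z ->
  \sum_mu `|softmax x mu - softmax z mu|
    <= 2 * K%:R * (beta * norm2 (x - z)) / expR (- (beta / 2)).
Proof.
move=> hx hz; have -> : K%:R = #|'I_K|%:R :> R by rewrite card_ord.
apply: sum_dist_normalized_le => [mu|mu|mu||]; rewrite ?weight_gt0 ?expR_gt0 //.
  exact: weight_dist_le.
apply: (le_trans (weight_ge x (Ordinal K_gt0) hx)).
by apply: ler_sum_term => mu; apply/ltW/weight_gt0.
Qed.

End HopfieldWeights.

Theorem lemma2 (R : realType) (D K : nat) (hK : (0 < K)%N)
  (xi : 'I_K -> 'rV[R]_D) (beta : R) (hbeta : 0 < beta)
  (hxi : forall mu, inX (xi mu)) (x z : 'rV[R]_D) (hx : inX x) (hz : inX z) :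
  norm2 (gradE xi beta x - gradE xi beta z)
    <= (1 + 2 * K%:R * beta * expR (beta / 2)) * norm2 (x - z).
Proof.
set e := norm2 (x - z).
have -> : (1 + 2 * K%:R * beta * expR (beta / 2)) * e =
    e + 2 * K%:R * (beta * e) / expR (- (beta / 2)).
  by rewrite expRN invrK; ring.
rewrite gradE_sub; apply: (le_trans (ler_norm2D _ _)); rewrite norm2N lerD2l.
apply: le_trans (sum_dist_softmax_le hbeta hxi hK x z hx hz).
apply: (le_trans (ler_norm2_sum _)); apply: ler_sum => mu _.
by rewrite norm2Z ler_piMr // inX_norm2_le1.
Qed.
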